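(* Let $f:\mathbb{S}^3\to\mathbb{S}^3\subset\mathbb{H}$ be smooth and let $\Psi=[\tilde u,f]$ be the corresponding unit spinor on $\mathbb{S}^3$. For $a\in\mathrm{Im}\,\mathbb{H}$ let $\xi_a$ be defined by $\xi_a\cdot\Psi=\Psi a$ (explicitly, $\xi_a(g)=g\,f(g)\,a\,f(g)^{-1}$). Then the vector fields $\xi_a$ are divergence-free for all $a\in\mathrm{Im}\,\mathbb{H}$ if and only if for every $g\in\mathbb{S}^3$ the endomorphism $M_g$ of $\mathrm{Im}\,\mathbb{H}$ defined by $M_g(x):=f_*(gx)\,f(g)^{-1}$ is symmetric with respect to the standard Euclidean scalar product on $\mathrm{Im}\,\mathbb{H}\cong\mathbb{R}^3$.
   Context: $\mathbb{S}^3$ is the unit sphere in $\mathbb{H}$ with its round metric and Lie group structure; its Lie algebra is $\mathrm{Im}\,\mathbb{H}$ and $\mathrm{T}_g\mathbb{S}^3=g\,\mathrm{Im}\,\mathbb{H}$ (quaternion products). $u(g)=(gi,gj,gk)$ is the left-invariant orthonormal frame, defining the orientation, and $\tilde u$ is a lift of $u$ to the spin principal bundle. Every spinor is written $\Psi=[\tilde u,f]$ for a function $f:\mathbb{S}^3\to\mathbb{H}$ (spinor module $\mathbb{H}$); the Clifford product of a tangent vector $gx$ ($x\in\mathrm{Im}\,\mathbb{H}$) with $[\tilde u,f]$ is $[\tilde u,xf]$ (left quaternion multiplication) and the quaternionic structure is $[\tilde u,f]a=[\tilde u,fa]$. $f_*(gx)$ denotes the derivative of $f$ in the direction of the tangent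 vector $gx$, and $f_*(gx)f(g)^{-1}$ is a quaternion product. *)

From Stdlib Require Import Reals List.
Open Scope R_scope.

Record quat := mkQ { qr : R; qi : R; qj : R; qk : R }.

Definition qadd (p q : quat) : quat :=
  mkQ (qr p + qr q) (qi p + qi q) (qj p + qj q) (qk p + qk q).
Definition qscale (t : R) (q : quat) : quat :=
  mkQ (t * qr q) (t * qi q) (t * qj q) (t * qk q).
Definition qsub (p q : quat) : quat := qadd p (qscale (-1) q).
Definition qmul (p q : quat) : quat :=
  mkQ (qr p * qr q - qi p * qi q - qj p * qj q - qk p * qk q)
      (qr p * qi q + qi p * qr q + qj p * qk q - qk p * qj q)
      (qr p * qj q - qi p * qk q + qj p * qr q + qk p * qi q)
      (qr p * qk q + qi p * qj q - qj p * qi q + qk p * qr q).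
Definition qconj (q : quat) : quat := mkQ (qr q) (- qi q) (- qj q) (- qk q).
Definition qdot (p q : quat) : R :=
  qr p * qr q + qi p * qi q + qj p * qj q + qk p * qk q.
Definition qnorm2 (q : quat) : R := qdot q q.
Definition qinv (q : quat) : quat := qscale (/ qnorm2 q) (qconj q).

Definition qI : quat := mkQ 0 1 0 0.
Definition qJ : quat := mkQ 0 0 1 0.
Definition qK : quat := mkQ 0 0 0 1.

Definition isIm (q : quat) : Prop := qr q = 0.
Definition onS3 (q : quat) : Prop := qnorm2 q = 1.

Definition comp (n : nat) (q : quat) : R :=
  match n with 0 => qr q | 1 => qi q | 2 => qj q | _ => qk q end.
Definition basis (n : nat) : quat :=
  match n with 0 => mkQ 1 0 0 0 | 1 => qI | 2 => qJ | _ => qK end.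

Definition cont4 (u : quat -> R) : Prop :=
  forall p eps, 0 < eps -> exists del, 0 < del /\
    forall q, qnorm2 (qsub q p) < del * del -> Rabs (u q - u p) < eps.

(* C^infinity on R^4: all iterated partial derivatives exist and are continuous.
   D l is the iterated partial derivative along the index list l. *)
Definition smooth_R (u : quat -> R) : Prop :=
  exists D : list nat -> quat -> R,
    D nil = u /\
    (forall l, cont4 (D l)) /\
    (forall l i p, (i < 4)%nat ->
       derivable_pt_lim (fun t => D l (qadd p (qscale t (basis i)))) 0
                        (D (i :: l) p)).

Definition smoothH (F : quat -> quat) : Prop :=
  forall n, (n < 4)%nat -> smooth_R (fun p => comp n (F p)).

Definition dirD (G : quat -> quat) (p v w : quat) : Prop :=
  forall n, (n < 4)%nat ->
    derivable_pt_lim (fun t => comp n (G (qadd p (qscale t v)))) 0 (comp n w).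

Definition xi (F : quat -> quat) (a : quat) (p : quat) : quat :=
  qmul (qmul (qmul p (F p)) a) (qinv (F p)).

(* Divergence on S^3 (round metric) w.r.t. the orthonormal frame (gi,gj,gk):
   div X (g) = sum_e < nabla_{ge} X, ge >, and since ge is tangent the
   Levi-Civita derivative may be replaced by the ambient derivative. *)
Definition div_free_S3 (X : quat -> quat) : Prop :=
  forall g, onS3 g -> forall w1 w2 w3,
    dirD X g (qmul g qI) w1 -> dirD X g (qmul g qJ) w2 ->
    dirD X g (qmul g qK) w3 ->
    qdot w1 (qmul g qI) + qdot w2 (qmul g qJ) + qdot w3 (qmul g qK) = 0.

Definition Mg_symmetric (F : quat -> quat) : Prop :=
  forall g, onS3 g -> forall x y wx wy, isIm x -> isIm y ->
    dirD F g (qmul g x) wx -> dirD F g (qmul g y) wy ->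
    qdot (qmul wx (qinv (F g))) y = qdot x (qmul wy (qinv (F g))).

(* Write b := f a f^-1 and m_e := f_*(g e) f^-1 = M_g(e).  Differentiating
   xi_a(g) = g f a f^-1 along g e (e = i, j, k) with the product rule, and using
   that left multiplication by the unit g is an isometry, turns the divergence
   into sum_e <e b + m_e b - b m_e, e>.  As b is imaginary, <e b, e> = 0, and
   m b - b m = 2 (Im m x b), so div xi_a = 2 <s, b> where s is the axial vector
   of the skew part of M_g.  Conjugation by f maps Im H onto itself, so all the
   xi_a are divergence-free iff s = 0, i.e. iff M_g is symmetric.  Smoothness of
   f enters only through the linearity of f_*, which follows from the
   continuity of the partial derivatives. *)

From Stdlib Require Import Reals List Lra Lia.
Open Scope R_scope.

Lemma derivable_pt_lim_eq f x l l' :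
  derivable_pt_lim f x l -> l = l' -> derivable_pt_lim f x l'.
Proof. now intros H <-. Qed.

Lemma derivable_pt_lim_add f g x a b : derivable_pt_lim f x a -> derivable_pt_lim g x b ->
  derivable_pt_lim (fun t => f t + g t) x (a + b).
Proof. exact (derivable_pt_lim_plus f g x a b). Qed.

Lemma derivable_pt_lim_sub f g x a b : derivable_pt_lim f x a -> derivable_pt_lim g x b ->
  derivable_pt_lim (fun t => f t - g t) x (a - b).
Proof. exact (derivable_pt_lim_minus f g x a b). Qed.

Lemma derivable_pt_lim_mul f g x a b : derivable_pt_lim f x a -> derivable_pt_lim g x b ->
  derivable_pt_lim (fun t => f t * g t) x (a * g x + f x * b).
Proof. exact (derivable_pt_lim_mult f g x a b). Qed.

Lemma derivable_pt_lim_neg f x a :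
  derivable_pt_lim f x a -> derivable_pt_lim (fun t => - f t) x (- a).
Proof. exact (derivable_pt_lim_opp f x a). Qed.

Lemma derivable_pt_lim_cst c x : derivable_pt_lim (fun _ => c) x 0.
Proof. exact (derivable_pt_lim_const c x). Qed.

Lemma derivable_pt_lim_inverse f x a : derivable_pt_lim f x a -> f x <> 0 ->
  derivable_pt_lim (fun t => / f t) x (- a / (f x * f x)).
Proof.
  intros Hf Hnz.
  eapply derivable_pt_lim_ext, derivable_pt_lim_eq.
  - intros t. cbv [div_fct]. unfold Rdiv. now rewrite Rmult_1_l.
  - exact (derivable_pt_lim_div (fun _ => 1) f x 0 a (derivable_pt_lim_const 1 x) Hf Hnz).
  - unfold Rsqr. field. exact Hnz.
Qed.

Ltac derive_rational :=
  eapply derivable_pt_lim_eq;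
  [ repeat first
      [ apply derivable_pt_lim_add | apply derivable_pt_lim_sub
      | apply derivable_pt_lim_mul | apply derivable_pt_lim_neg
      | apply derivable_pt_lim_cst | apply derivable_pt_lim_id
      | apply derivable_pt_lim_inverse | eassumption ]
  | cbv beta ].

Lemma increment_bound (h h' : R -> R) c eps s :
  (forall x, derivable_pt_lim h x (h' x)) ->
  (forall x, Rabs x <= Rabs s -> Rabs (h' x - c) <= eps) ->
  Rabs (h s - h 0 - c * s) <= eps * Rabs s.
Proof.
  intros Hh Hbound.
  destruct (MVT_abs (fun x => h x - c * x) (fun x => h' x - c) 0 s) as [x [Hx [Hlo Hhi]]].
  { intros x _. derive_rational; [apply Hh | ring]. }
  replace (h s - h 0 - c * s) with (h s - c * s - (h 0 - c * 0)) by ring.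
  rewrite Hx, Rminus_0_r. apply Rmult_le_compat_r; [apply Rabs_pos|].
  apply Hbound, Rabs_le. split.
  - apply Rle_trans with (Rmin 0 s); [|exact Hlo].
    apply Rmin_glb; [pose proof (Rabs_pos s)|pose proof (Rle_abs (- s)); rewrite Rabs_Ropp in *]; lra.
  - apply Rle_trans with (Rmax 0 s); [exact Hhi|].
    apply Rmax_lub; [apply Rabs_pos | apply Rle_abs].
Qed.

Definition qzero : quat := mkQ 0 0 0 0.
Definition qone : quat := mkQ 1 0 0 0.

Ltac quat_ring :=
  repeat match goal with q : quat |- _ => destruct q end;
  cbv [qadd qscale qsub qmul qdot qnorm2 qzero qone qI qJ qK] in *; simpl in *;
  lazymatch goal with
  | |- mkQ _ _ _ _ = mkQ _ _ _ _ => f_equal; ring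
  | _ => ring
  end.

Lemma quat_ext p q : (forall n, (n < 4)%nat -> comp n p = comp n q) -> p = q.
Proof.
  intros H. destruct p, q.
  f_equal; [apply (H 0%nat) | apply (H 1%nat) | apply (H 2%nat) | apply (H 3%nat)]; lia.
Qed.

Lemma comp_qadd n p q : comp n (qadd p q) = comp n p + comp n q.
Proof. now destruct n as [|[|[|n]]]. Qed.

Lemma comp_qscale n t q : comp n (qscale t q) = t * comp n q.
Proof. now destruct n as [|[|[|n]]]. Qed.

Lemma comp_basis n i : (n < 4)%nat -> (i < 4)%nat ->
  comp n (basis i) = if Nat.eqb n i then 1 else 0.
Proof. intros Hn Hi. destruct n as [|[|[|[|n]]]], i as [|[|[|[|i]]]]; reflexivity || lia. Qed.

Lemma qadd_scale0 q v : qadd q (qscale 0 v) = q.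
Proof. quat_ring. Qed.

Lemma qadd_scale_shift q v s t :
  qadd (qadd q (qscale s v)) (qscale t v) = qadd q (qscale (s + t) v).
Proof. quat_ring. Qed.

Lemma qmul_assoc p q r : qmul (qmul p q) r = qmul p (qmul q r).
Proof. quat_ring. Qed.

Lemma qmul_addl p q r : qmul (qadd p q) r = qadd (qmul p r) (qmul q r).
Proof. quat_ring. Qed.

Lemma qmul_addr p q r : qmul p (qadd q r) = qadd (qmul p q) (qmul p r).
Proof. quat_ring. Qed.

Lemma qmul_scaler p c q : qmul p (qscale c q) = qscale c (qmul p q).
Proof. quat_ring. Qed.

Lemma qmul_0r p : qmul p qzero = qzero.
Proof. quat_ring. Qed.

Lemma qadd_0r p : qadd p qzero = p.
Proof. quat_ring. Qed.

Lemma qadd_assoc p q r : qadd (qadd p q) r = qadd p (qadd q r).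
Proof. quat_ring. Qed.

Lemma qmul_1l p : qmul qone p = p.
Proof. quat_ring. Qed.

Lemma qmul_1r p : qmul p qone = p.
Proof. quat_ring. Qed.

Lemma qmulVq f : qnorm2 f <> 0 -> qmul (qinv f) f = qone.
Proof.
  destruct f. unfold qinv, qscale, qconj, qnorm2, qdot, qmul, qone; simpl. intros Hnz.
  f_equal; field; exact Hnz.
Qed.

Lemma qmulqV f : qnorm2 f <> 0 -> qmul f (qinv f) = qone.
Proof.
  destruct f. unfold qinv, qscale, qconj, qnorm2, qdot, qmul, qone; simpl. intros Hnz.
  f_equal; field; exact Hnz.
Qed.

Lemma qr_qmulC p q : qr (qmul p q) = qr (qmul q p).
Proof. quat_ring. Qed.

Lemma qr_conjugate u v a : qmul v u = qone -> qr (qmul u (qmul a v)) = qr a.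
Proof. intros Hvu. now rewrite qr_qmulC, qmul_assoc, Hvu, qmul_1r. Qed.

Lemma qdot_mul2l g x y : qdot (qmul g x) (qmul g y) = qnorm2 g * qdot x y.
Proof. quat_ring. Qed.

Definition box (p : quat) (r : R) (z : quat) : Prop :=
  forall n, (n < 4)%nat -> Rabs (comp n z - comp n p) <= r.

Lemma qnorm2_sub_box p r z : box p r z -> qnorm2 (qsub z p) <= 4 * (r * r).
Proof.
  intros Hbox.
  assert (Hsq : forall n, (n < 4)%nat -> (comp n z - comp n p) ^ 2 <= r * r).
  { intros n Hn. specialize (Hbox n Hn). rewrite <- Rsqr_pow2, Rsqr_abs.
    pose proof (Rabs_pos (comp n z - comp n p)). unfold Rsqr. nra. }
  pose proof (Hsq 0%nat ltac:(lia)). pose proof (Hsq 1%nat ltac:(lia)).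
  pose proof (Hsq 2%nat ltac:(lia)). pose proof (Hsq 3%nat ltac:(lia)).
  destruct z, p. unfold qnorm2, qdot, qsub, qadd, qscale; simpl in *. nra.
Qed.

Lemma cont4_common_delta (u : nat -> quat -> R) p eps :
  (forall n, (n < 4)%nat -> cont4 (u n)) -> 0 < eps -> exists del, 0 < del /\
    forall n q, (n < 4)%nat -> qnorm2 (qsub q p) < del * del -> Rabs (u n q - u n p) < eps.
Proof.
  intros Hu Heps.
  destruct (Hu 0%nat ltac:(lia) p eps Heps) as [d0 [Hd0 H0]],
    (Hu 1%nat ltac:(lia) p eps Heps) as [d1 [Hd1 H1]],
    (Hu 2%nat ltac:(lia) p eps Heps) as [d2 [Hd2 H2]],
    (Hu 3%nat ltac:(lia) p eps Heps) as [d3 [Hd3 H3]].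
  set (del := Rmin (Rmin d0 d1) (Rmin d2 d3)).
  assert (Hpos : 0 < del) by (unfold del; repeat apply Rmin_pos; assumption).
  assert (Hle : forall d, del <= d -> del * del <= d * d) by (intros; nra).
  assert (H01 := Rmin_l d0 d1). assert (H11 := Rmin_r d0 d1).
  assert (H23 := Rmin_l d2 d3). assert (H33 := Rmin_r d2 d3).
  assert (Hl := Rmin_l (Rmin d0 d1) (Rmin d2 d3)). assert (Hr := Rmin_r (Rmin d0 d1) (Rmin d2 d3)).
  fold del in Hl, Hr.
  exists del. split; [exact Hpos|]. intros n q Hn Hq.
  destruct n as [|[|[|[|n]]]]; [apply H0 | apply H1 | apply H2 | apply H3 | lia];
    (eapply Rlt_le_trans; [exact Hq | apply Hle; lra]).
Qed.

(* Moves from p to p + h v one coordinate at a time, so that each step is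
   controlled by a single partial derivative through the mean value theorem. *)
Fixpoint stair (p v : quat) (h : R) (k : nat) : quat :=
  match k with
  | O => p
  | S k => qadd (stair p v h k) (qscale (h * comp k v) (basis k))
  end.

Lemma stair_comp_ge p v h k n : (k <= n)%nat -> (n < 4)%nat ->
  comp n (stair p v h k) = comp n p.
Proof.
  induction k as [|k IH]; intros Hkn Hn; [reflexivity|]. simpl.
  rewrite comp_qadd, comp_qscale, comp_basis, IH by lia.
  replace (Nat.eqb n k) with false by (symmetry; apply Nat.eqb_neq; lia). ring.
Qed.

Lemma stair_comp_lt p v h k n : (n < k)%nat -> (k <= 4)%nat ->
  comp n (stair p v h k) = comp n p + h * comp n v.
Proof.
  induction k as [|k IH]; intros Hnk Hk; [lia|]. simpl.
  rewrite comp_qadd, comp_qscale, comp_basis by lia.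
  destruct (Nat.eq_dec n k) as [->|Hne].
  - rewrite stair_comp_ge, Nat.eqb_refl by lia. ring.
  - rewrite IH by lia. replace (Nat.eqb n k) with false by (symmetry; apply Nat.eqb_neq; lia). ring.
Qed.

Lemma stair_last p v h : stair p v h 4 = qadd p (qscale h v).
Proof.
  apply quat_ext. intros n Hn.
  rewrite stair_comp_lt, comp_qadd, comp_qscale by lia. reflexivity.
Qed.

Lemma stair_segment_box p v h k x r : (k < 4)%nat ->
  (forall n, (n < 4)%nat -> Rabs (h * comp n v) <= r) -> Rabs x <= r ->
  box p r (qadd (stair p v h k) (qscale x (basis k))).
Proof.
  intros Hk Hv Hx n Hn.
  rewrite comp_qadd, comp_qscale, comp_basis by lia.
  destruct (Nat.lt_ge_cases n k) as [Hlt|Hge].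
  - rewrite stair_comp_lt by lia.
    replace (Nat.eqb n k) with false by (symmetry; apply Nat.eqb_neq; lia).
    replace (_ - _) with (h * comp n v) by ring. auto.
  - rewrite stair_comp_ge by lia.
    destruct (Nat.eqb n k);
      [replace (_ - _) with x by ring | replace (_ - _) with 0 by ring; rewrite Rabs_R0];
      eauto using Rle_trans, Rabs_pos.
Qed.

Lemma difference_quotient_split a0 a1 a2 a3 a4 c0 c1 c2 c3 v0 v1 v2 v3 h e eps : h <> 0 ->
  Rabs (a1 - a0 - c0 * (h * v0)) <= e * Rabs (h * v0) ->
  Rabs (a2 - a1 - c1 * (h * v1)) <= e * Rabs (h * v1) ->
  Rabs (a3 - a2 - c2 * (h * v2)) <= e * Rabs (h * v2) ->
  Rabs (a4 - a3 - c3 * (h * v3)) <= e * Rabs (h * v3) ->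
  e * Rabs h * (Rabs v0 + Rabs v1 + Rabs v2 + Rabs v3) < eps * Rabs h ->
  Rabs ((a4 - a0) / h - (v0 * c0 + v1 * c1 + v2 * c2 + v3 * c3)) < eps.
Proof.
  intros Hh E0 E1 E2 E3 Hsum. rewrite !Rabs_mult in E0, E1, E2, E3.
  assert (Hpos : 0 < Rabs h) by (apply Rabs_pos_lt, Hh).
  apply (Rmult_lt_reg_r (Rabs h)); [exact Hpos|].
  rewrite <- Rabs_mult.
  replace (((a4 - a0) / h - _) * h) with ((a1 - a0 - c0 * (h * v0)) + (a2 - a1 - c1 * (h * v1))
     + (a3 - a2 - c2 * (h * v2)) + (a4 - a3 - c3 * (h * v3))) by (field; exact Hh).
  pose proof (Rabs_triang ((a1 - a0 - c0 * (h * v0)) + (a2 - a1 - c1 * (h * v1))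
     + (a3 - a2 - c2 * (h * v2))) (a4 - a3 - c3 * (h * v3))).
  pose proof (Rabs_triang ((a1 - a0 - c0 * (h * v0)) + (a2 - a1 - c1 * (h * v1)))
     (a3 - a2 - c2 * (h * v2))).
  pose proof (Rabs_triang (a1 - a0 - c0 * (h * v0)) (a2 - a1 - c1 * (h * v1))).
  nra.
Qed.

Section ContinuousPartials.

Variables (u : quat -> R) (du : nat -> quat -> R).
Hypothesis du_cont : forall i, (i < 4)%nat -> cont4 (du i).
Hypothesis u_partial : forall i p, (i < 4)%nat ->
  derivable_pt_lim (fun t => u (qadd p (qscale t (basis i)))) 0 (du i p).

Lemma partial_along q i s : (i < 4)%nat ->
  derivable_pt_lim (fun x => u (qadd q (qscale x (basis i)))) s (du i (qadd q (qscale s (basis i)))).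
Proof.
  intros Hi eps Heps.
  destruct (u_partial i (qadd q (qscale s (basis i))) Hi eps Heps) as [del Hdel].
  exists del. intros t Ht0 Ht. specialize (Hdel t Ht0 Ht). cbv beta in Hdel.
  now rewrite !qadd_scale_shift, Rplus_0_l, Rplus_0_r in Hdel.
Qed.

Lemma partial_increment q i s c eps : (i < 4)%nat ->
  (forall x, Rabs x <= Rabs s -> Rabs (du i (qadd q (qscale x (basis i))) - c) <= eps) ->
  Rabs (u (qadd q (qscale s (basis i))) - u q - c * s) <= eps * Rabs s.
Proof.
  intros Hi Hbound.
  pose proof (increment_bound _ _ c eps s (fun x => partial_along q i x Hi) Hbound) as H.
  cbv beta in H. now rewrite qadd_scale0 in H.
Qed.

Lemma directional_derivative p v :
  derivable_pt_lim (fun t => u (qadd p (qscale t v))) 0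
    (comp 0 v * du 0%nat p + comp 1 v * du 1%nat p + comp 2 v * du 2%nat p + comp 3 v * du 3%nat p).
Proof.
  intros eps Heps.
  set (K := 1 + Rabs (qr v) + Rabs (qi v) + Rabs (qj v) + Rabs (qk v)).
  assert (Habs := fun x => Rabs_pos x).
  pose proof (Habs (qr v)). pose proof (Habs (qi v)).
  pose proof (Habs (qj v)). pose proof (Habs (qk v)).
  assert (HK : 0 < K) by (unfold K; lra).
  assert (HvK : forall n, (n < 4)%nat -> Rabs (comp n v) <= K).
  { intros n Hn. unfold K. destruct n as [|[|[|[|n]]]]; simpl; lra. }
  set (e' := eps / K).
  destruct (cont4_common_delta du p e' du_cont)
    as [del [Hdel Hcont]]; [unfold e'; apply Rdiv_lt_0_compat; assumption|].
  assert (Hstep : 0 < del / (2 * K)) by (apply Rdiv_lt_0_compat; lra).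
  exists (mkposreal _ Hstep). simpl. intros h Hh0 Hh.
  assert (Hr : 4 * ((Rabs h * K) * (Rabs h * K)) < del * del).
  { apply (Rmult_lt_compat_r K) in Hh; [|exact HK].
    replace (del / (2 * K) * K) with (del / 2) in Hh by (field; lra).
    assert (0 <= Rabs h * K) by (pose proof (Habs h); nra).
    nra. }
  assert (Hhv : forall n, (n < 4)%nat -> Rabs (h * comp n v) <= Rabs h * K).
  { intros n Hn. rewrite Rabs_mult. apply Rmult_le_compat_l; auto. }
  assert (Hseg : forall k, (k < 4)%nat ->
    Rabs (u (stair p v h (S k)) - u (stair p v h k) - du k p * (h * comp k v))
      <= e' * Rabs (h * comp k v)).
  { intros k Hk. apply partial_increment; [exact Hk|]. intros x Hx. apply Rlt_le, Hcont; [exact Hk|].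
    eapply Rle_lt_trans; [apply qnorm2_sub_box, stair_segment_box|exact Hr]; eauto using Rle_trans. }
  rewrite Rplus_0_l, qadd_scale0, <- stair_last.
  apply (difference_quotient_split (u p) (u (stair p v h 1)) (u (stair p v h 2))
           (u (stair p v h 3)) _ _ _ _ _ _ _ _ _ _ e');
    [exact Hh0 | apply (Hseg 0%nat) | apply (Hseg 1%nat) | apply (Hseg 2%nat) | apply (Hseg 3%nat) |]; [lia..|].
  replace eps with (e' * K) by (unfold e'; field; lra). unfold K.
  assert (0 < e' * Rabs h) by (apply Rmult_lt_0_compat; [unfold e'; apply Rdiv_lt_0_compat|apply Rabs_pos_lt]; auto).
  cbn [comp]. nra.
Qed.

End ContinuousPartials.

Lemma smooth_R_directional (u : quat -> R) : smooth_R u ->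
  exists du : nat -> quat -> R, forall p v,
    derivable_pt_lim (fun t => u (qadd p (qscale t v))) 0
      (comp 0 v * du 0%nat p + comp 1 v * du 1%nat p + comp 2 v * du 2%nat p + comp 3 v * du 3%nat p).
Proof.
  intros [D [<- [Hcont Hpartial]]].
  exists (fun i => D (i :: nil)).
  exact (directional_derivative _ _ (fun i _ => Hcont (i :: nil)) (fun i p => Hpartial nil i p)).
Qed.

Definition jac (P : nat -> quat) (v : quat) : quat :=
  qadd (qadd (qadd (qscale (qr v) (P 0%nat)) (qscale (qi v) (P 1%nat)))
             (qscale (qj v) (P 2%nat))) (qscale (qk v) (P 3%nat)).

Lemma smoothH_jacobian F : smoothH F ->
  exists P : quat -> nat -> quat, forall p v, dirD F p v (jac (P p) v).
Proof.
  intros hF.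
  destruct (smooth_R_directional _ (hF 0%nat ltac:(lia))) as [d0 H0],
    (smooth_R_directional _ (hF 1%nat ltac:(lia))) as [d1 H1],
    (smooth_R_directional _ (hF 2%nat ltac:(lia))) as [d2 H2],
    (smooth_R_directional _ (hF 3%nat ltac:(lia))) as [d3 H3].
  exists (fun p i => mkQ (d0 i p) (d1 i p) (d2 i p) (d3 i p)).
  intros p v n Hn.
  destruct n as [|[|[|[|n]]]]; [ | | | | lia];
    (eapply derivable_pt_lim_eq; [apply H0 || apply H1 || apply H2 || apply H3 |]);
    unfold jac, qadd, qscale; simpl; ring.
Qed.

Definition curve_deriv (A : R -> quat) (w : quat) : Prop :=
  forall n, (n < 4)%nat -> derivable_pt_lim (fun t => comp n (A t)) 0 (comp n w).

Lemma curve_derivE A w : curve_deriv A w <->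
  derivable_pt_lim (fun t => qr (A t)) 0 (qr w) /\ derivable_pt_lim (fun t => qi (A t)) 0 (qi w) /\
  derivable_pt_lim (fun t => qj (A t)) 0 (qj w) /\ derivable_pt_lim (fun t => qk (A t)) 0 (qk w).
Proof.
  split.
  - intros H. repeat split; [apply (H 0%nat) | apply (H 1%nat) | apply (H 2%nat) | apply (H 3%nat)]; lia.
  - intros (H0 & H1 & H2 & H3) n Hn. destruct n as [|[|[|[|n]]]]; assumption || lia.
Qed.

Lemma curve_deriv_unique A w w' : curve_deriv A w -> curve_deriv A w' -> w = w'.
Proof.
  intros Hw Hw'. apply quat_ext. intros n Hn.
  exact (uniqueness_limite _ 0 _ _ (Hw n Hn) (Hw' n Hn)).
Qed.

Lemma curve_deriv_eq A w w' : curve_deriv A w -> w = w' -> curve_deriv A w'.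
Proof. now intros H <-. Qed.

Lemma curve_deriv_line p v : curve_deriv (fun t => qadd p (qscale t v)) v.
Proof.
  apply curve_derivE. unfold qadd, qscale; simpl.
  repeat split; derive_rational; ring.
Qed.

Lemma curve_deriv_const c : curve_deriv (fun _ => c) qzero.
Proof. intros n Hn. destruct n as [|[|[|n]]]; apply derivable_pt_lim_cst. Qed.

Lemma curve_deriv_mul A A' B B' : curve_deriv A A' -> curve_deriv B B' ->
  curve_deriv (fun t => qmul (A t) (B t)) (qadd (qmul A' (B 0)) (qmul (A 0) B')).
Proof.
  rewrite !curve_derivE. intros (a0 & a1 & a2 & a3) (b0 & b1 & b2 & b3).
  unfold qmul, qadd; simpl.
  repeat split; derive_rational; ring.
Qed.

Lemma curve_deriv_inv A A' : curve_deriv A A' -> qnorm2 (A 0) <> 0 ->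
  curve_deriv (fun t => qinv (A t)) (qscale (-1) (qmul (qmul (qinv (A 0)) A') (qinv (A 0)))).
Proof.
  rewrite !curve_derivE. intros (a0 & a1 & a2 & a3) Hnz.
  unfold qnorm2, qdot in Hnz.
  unfold qinv, qmul, qscale, qconj, qnorm2, qdot; simpl.
  repeat split; derive_rational; try exact Hnz; field; exact Hnz.
Qed.

Definition xi_deriv (g f a v W : quat) : quat :=
  qsub (qmul (qmul (qadd (qmul v f) (qmul g W)) a) (qinv f))
       (qmul (qmul (qmul g f) a) (qmul (qmul (qinv f) W) (qinv f))).

Lemma xi_dirD F a g v W : dirD F g v W -> qnorm2 (F g) <> 0 ->
  dirD (xi F a) g v (xi_deriv g (F g) a v W).
Proof.
  intros HW Hnz.
  change (curve_deriv (fun t => F (qadd g (qscale t v))) W) in HW.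
  change (curve_deriv (fun t => xi F a (qadd g (qscale t v))) (xi_deriv g (F g) a v W)).
  unfold xi. eapply curve_deriv_eq.
  - apply curve_deriv_mul; [apply curve_deriv_mul; [apply curve_deriv_mul|]|].
    + apply curve_deriv_line.
    + exact HW.
    + apply curve_deriv_const.
    + apply curve_deriv_inv; [exact HW|]. now rewrite qadd_scale0.
  - cbv beta. rewrite !qadd_scale0, qmul_0r, qadd_0r, qmul_scaler. reflexivity.
Qed.

Lemma xi_deriv_dot g f a e W : onS3 g -> qnorm2 f <> 0 ->
  let b := qmul f (qmul a (qinv f)) in let m := qmul W (qinv f) in
  qdot (xi_deriv g f a (qmul g e) W) (qmul g e) =
  qdot (qadd (qmul e b) (qsub (qmul m b) (qmul b m))) e.
Proof.
  intros Hg Hf b m.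
  assert (Hmb : qmul m b = qmul W (qmul a (qinv f))).
  { unfold m, b. now rewrite qmul_assoc, <- (qmul_assoc (qinv f)), qmulVq, qmul_1l. }
  rewrite Hmb.
  replace (xi_deriv g f a (qmul g e) W)
    with (qmul g (qadd (qmul e b) (qsub (qmul W (qmul a (qinv f))) (qmul b m)))).
  - rewrite qdot_mul2l, Hg. apply Rmult_1_l.
  - unfold xi_deriv, b, m, qsub.
    rewrite !qmul_addl, !qmul_addr, !qmul_scaler, !qmul_assoc, qadd_assoc. reflexivity.
Qed.

(* Axial vector of the antisymmetric part of the linear map of Im H sending
   i, j, k to (the imaginary parts of) m1, m2, m3. *)
Definition skew_vector (m1 m2 m3 : quat) : quat :=
  mkQ 0 (qk m2 - qj m3) (qi m3 - qk m1) (qj m1 - qi m2).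

Lemma commutator_trace b m1 m2 m3 : isIm b ->
  qdot (qadd (qmul qI b) (qsub (qmul m1 b) (qmul b m1))) qI
  + qdot (qadd (qmul qJ b) (qsub (qmul m2 b) (qmul b m2))) qJ
  + qdot (qadd (qmul qK b) (qsub (qmul m3 b) (qmul b m3))) qK
  = 2 * qdot (skew_vector m1 m2 m3) b.
Proof.
  destruct b as [b0 b1 b2 b3]. unfold isIm; simpl. intros ->. quat_ring.
Qed.

Lemma xi_divergence g f a W1 W2 W3 : onS3 g -> qnorm2 f <> 0 -> isIm a ->
  qdot (xi_deriv g f a (qmul g qI) W1) (qmul g qI)
  + qdot (xi_deriv g f a (qmul g qJ) W2) (qmul g qJ)
  + qdot (xi_deriv g f a (qmul g qK) W3) (qmul g qK)
  = 2 * qdot (skew_vector (qmul W1 (qinv f)) (qmul W2 (qinv f)) (qmul W3 (qinv f)))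
             (qmul f (qmul a (qinv f))).
Proof.
  intros Hg Hf Ha. rewrite !xi_deriv_dot by assumption.
  apply commutator_trace. unfold isIm. now rewrite qr_conjugate by (apply qmulVq, Hf).
Qed.

Definition imlin (m1 m2 m3 x : quat) : quat :=
  qadd (qadd (qscale (qi x) m1) (qscale (qj x) m2)) (qscale (qk x) m3).

Lemma imlin_symmetric_iff m1 m2 m3 :
  (forall x y, isIm x -> isIm y -> qdot (imlin m1 m2 m3 x) y = qdot x (imlin m1 m2 m3 y))
  <-> skew_vector m1 m2 m3 = qzero.
Proof.
  unfold skew_vector, qzero, imlin, isIm. split.
  - intros Hsym.
    pose proof (Hsym qI qJ eq_refl eq_refl). pose proof (Hsym qJ qK eq_refl eq_refl).
    pose proof (Hsym qK qI eq_refl eq_refl).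
    destruct m1, m2, m3. unfold qdot, qadd, qscale, qI, qJ, qK in *; simpl in *.
    f_equal; lra.
  - intros Hskew [x0 x1 x2 x3] [y0 y1 y2 y3]; simpl. intros -> ->.
    injection Hskew. destruct m1, m2, m3; simpl. intros E1 E2 E3.
    unfold qdot, qadd, qscale; simpl. nra.
Qed.

Lemma imlin_mulr m1 m2 m3 x c :
  qmul (imlin m1 m2 m3 x) c = imlin (qmul m1 c) (qmul m2 c) (qmul m3 c) x.
Proof. unfold imlin. quat_ring. Qed.

Lemma jac_add P u v : jac P (qadd u v) = qadd (jac P u) (jac P v).
Proof.
  destruct u, v, (P 0%nat), (P 1%nat), (P 2%nat), (P 3%nat).
  unfold jac, qadd, qscale; simpl. f_equal; ring.
Qed.

Lemma jac_scale P c v : jac P (qscale c v) = qscale c (jac P v).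
Proof.
  destruct v, (P 0%nat), (P 1%nat), (P 2%nat), (P 3%nat).
  unfold jac, qadd, qscale; simpl. f_equal; ring.
Qed.

Lemma qmul_im_expand g x : isIm x ->
  qmul g x = imlin (qmul g qI) (qmul g qJ) (qmul g qK) x.
Proof.
  destruct x as [x0 x1 x2 x3]. unfold isIm, imlin; simpl. intros ->. quat_ring.
Qed.

Lemma jac_mul_im P g x : isIm x ->
  jac P (qmul g x) = imlin (jac P (qmul g qI)) (jac P (qmul g qJ)) (jac P (qmul g qK)) x.
Proof.
  intros Hx. rewrite (qmul_im_expand g x Hx). unfold imlin at 1.
  now rewrite !jac_add, !jac_scale.
Qed.

Lemma im_orthogonal_zero s : isIm s -> (forall b, isIm b -> qdot s b = 0) -> s = qzero.
Proof.
  destruct s as [s0 s1 s2 s3]. unfold isIm, qzero; simpl. intros -> Horth.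
  pose proof (Horth qI eq_refl). pose proof (Horth qJ eq_refl). pose proof (Horth qK eq_refl).
  unfold qdot, qI, qJ, qK in *; simpl in *. f_equal; lra.
Qed.

Section AtPoint.

Variables (F : quat -> quat) (P : quat -> nat -> quat).
Hypothesis F_jac : forall p v, dirD F p v (jac (P p) v).
Variable g : quat.
Hypothesis g_S3 : onS3 g.
Hypothesis Fg_nz : qnorm2 (F g) <> 0.

Let M (e : quat) : quat := qmul (jac (P g) (qmul g e)) (qinv (F g)).

Lemma Mg_symmetric_at_iff :
  (forall x y wx wy, isIm x -> isIm y -> dirD F g (qmul g x) wx -> dirD F g (qmul g y) wy ->
     qdot (qmul wx (qinv (F g))) y = qdot x (qmul wy (qinv (F g))))
  <-> skew_vector (M qI) (M qJ) (M qK) = qzero.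
Proof.
  assert (HM : forall x, isIm x -> qmul (jac (P g) (qmul g x)) (qinv (F g)) = imlin (M qI) (M qJ) (M qK) x).
  { intros x Hx. now rewrite jac_mul_im, imlin_mulr. }
  rewrite <- imlin_symmetric_iff. split.
  - intros Hsym x y Hx Hy. rewrite <- !HM by assumption. exact (Hsym x y _ _ Hx Hy (F_jac _ _) (F_jac _ _)).
  - intros Hsym x y wx wy Hx Hy Hwx Hwy.
    rewrite (curve_deriv_unique _ _ _ Hwx (F_jac g (qmul g x))),
            (curve_deriv_unique _ _ _ Hwy (F_jac g (qmul g y))), !HM by assumption.
    now apply Hsym.
Qed.

Lemma div_free_at_iff :
  (forall a, isIm a -> forall w1 w2 w3,
     dirD (xi F a) g (qmul g qI) w1 -> dirD (xi F a) g (qmul g qJ) w2 ->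
     dirD (xi F a) g (qmul g qK) w3 ->
     qdot w1 (qmul g qI) + qdot w2 (qmul g qJ) + qdot w3 (qmul g qK) = 0)
  <-> skew_vector (M qI) (M qJ) (M qK) = qzero.
Proof.
  assert (Hxi : forall a e, dirD (xi F a) g (qmul g e) (xi_deriv g (F g) a (qmul g e) (jac (P g) (qmul g e))))
    by (intros; apply xi_dirD; auto).
  split.
  - intros Hdiv. apply im_orthogonal_zero; [reflexivity|]. intros b Hb.
    (* every imaginary b is f a f^-1 for the imaginary a = f^-1 b f *)
    set (a := qmul (qinv (F g)) (qmul b (F g))).
    assert (Ha : isIm a) by (unfold isIm, a; rewrite qr_conjugate by (apply qmulqV, Fg_nz); exact Hb).
    assert (Hb_a : qmul (F g) (qmul a (qinv (F g))) = b).
    { unfold a. rewrite <- !qmul_assoc, qmulqV, qmul_1l, qmul_assoc, qmulqV, qmul_1r by exact Fg_nz.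
      reflexivity. }
    pose proof (Hdiv a Ha _ _ _ (Hxi a qI) (Hxi a qJ) (Hxi a qK)) as H.
    rewrite xi_divergence, Hb_a in H by assumption. fold (M qI) (M qJ) (M qK) in H. lra.
  - intros Hskew a Ha w1 w2 w3 H1 H2 H3.
    rewrite (curve_deriv_unique _ _ _ H1 (Hxi a qI)), (curve_deriv_unique _ _ _ H2 (Hxi a qJ)),
            (curve_deriv_unique _ _ _ H3 (Hxi a qK)), xi_divergence by assumption.
    fold (M qI) (M qJ) (M qK). rewrite Hskew. unfold qdot, qzero; simpl. ring.
Qed.

End AtPoint.

Theorem lemma3p1 (F : quat -> quat)
  (hF : smoothH F) (hS : forall g, onS3 g -> onS3 (F g)) :
  (forall a, isIm a -> div_free_S3 (xi F a)) <-> Mg_symmetric F.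
Proof.
  destruct (smoothH_jacobian F hF) as [P HP].
  assert (Hnz : forall g, onS3 g -> qnorm2 (F g) <> 0)
    by (intros g Hg; unfold onS3 in hS; rewrite (hS g Hg); lra).
  split.
  - intros Hdiv g Hg. apply (Mg_symmetric_at_iff F P HP g).
    apply (div_free_at_iff F P HP g Hg (Hnz g Hg)). intros a Ha. exact (Hdiv a Ha g Hg).
  - intros Hsym a Ha g Hg. revert a Ha. apply (div_free_at_iff F P HP g Hg (Hnz g Hg)).
    apply (Mg_symmetric_at_iff F P HP g). exact (Hsym g Hg).
Qed.
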